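(* Let $H$ be a finite abelian group of order $n$, and for $f:H\to\{0,1\}$ define the multispectrum $A_f:H^{n-1}\to\mathbb{Z}$ by $$A_f(\ell_1,\dots,\ell_{n-1})=\sum_{k\in H}f(k)f(k+\ell_1)\cdots f(k+\ell_1+\cdots+\ell_{n-1}).$$ If $f_1,f_2:H\to\{0,1\}$ satisfy $A_{f_1}=A_{f_2}$, then $f_1$ is a shift of $f_2$, i.e. there is $\ell\in H$ with $f_1(k)=f_2(k+\ell)$ for all $k\in H$. *)

From mathcomp Require Import all_boot all_algebra.
Set Implicit Arguments. Unset Strict Implicit. Unset Printing Implicit Defensive.
Import GRing.Theory.
Local Open Scope ring_scope.

(* A lag vector (l_1,...,l_{n-1}) is an element
   of {ffun 'I_(n-1) -> H} with n = #|H|; index j : 'I_(n-1) stands for l_{j+1}. *)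

Definition partial_lag (H : finZmodType) (m : nat) (l : {ffun 'I_m -> H}) (i : nat) : H :=
  \sum_(j < m | (j < i)%N) l j.

Definition multispectrum (H : finZmodType) (f : H -> bool)
    (l : {ffun 'I_(#|H|.-1) -> H}) : int :=
  \sum_(k : H) \prod_(i < #|H|) ((f (k + partial_lag l i) : nat)%:Z).

From mathcomp Require Import all_boot all_algebra.
Local Open Scope ring_scope.
Import GRing.Theory.
Set Implicit Arguments. Unset Strict Implicit. Unset Printing Implicit Defensive.

(* A_f(l) counts the k at which the window k + {0, l_1, l_1 + l_2, ...} lies in
   the support of f.  As the n partial sums may enumerate any nonempty set
   (with repetitions), A_f1 = A_f2 says that a set fits into a translate of
   supp f1 exactly as often as into a translate of supp f2.  Fitting supp f2
   itself, and symmetrically supp f1, yields translations embedding each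
   support into the other, so by counting they are translates of each other. *)

Lemma prod_nat_bool (n : nat) (b : 'I_n -> bool) :
  \prod_(i < n) ((b i : nat)%:Z) = ([forall i, b i] : nat)%:Z.
Proof.
have [/forallP b_all | /forallPn [i not_bi]] := boolP [forall i, b i].
  by rewrite big1 // => i _; rewrite b_all.
by rewrite (bigD1 i) //= (negbTE not_bi) mul0r.
Qed.

Lemma imset_sub_antisym (T : finType) (u v : T -> T) (A B : {set T}) :
  injective u -> injective v ->
  u @: A \subset B -> v @: B \subset A -> u @: A = B.
Proof.
move=> inj_u inj_v uAB vBA; apply/eqP; rewrite eqEcard uAB card_imset //=.
by rewrite -(card_imset B inj_v) subset_leq_card.
Qed.

Section Windows.
Variable H : finZmodType.

Definition window_starts (f : H -> bool) (l : {ffun 'I_(#|H|.-1) -> H}) :=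
  [set k | [forall i : 'I_#|H|, f (k + partial_lag l i)]].

Lemma multispectrum_card f l : multispectrum f l = #|window_starts f l|%:Z.
Proof.
rewrite /multispectrum; under eq_bigr do rewrite prod_nat_bool.
rewrite -(big_morph Posz PoszD (erefl _)) -sum1_card; congr Posz.
by rewrite [RHS]big_mkcond; apply: eq_bigr => k _; rewrite inE; case: ifP.
Qed.

Lemma partial_lag_telescope (m : nat) (t : nat -> H) (i : nat) :
  (i <= m)%N -> partial_lag [ffun j : 'I_m => t j.+1 - t j] i = t i - t 0%N.
Proof.
move=> le_im; rewrite /partial_lag.
under eq_bigr do rewrite ffunE.
rewrite -(big_ord_widen _ (fun j => t j.+1 - t j) le_im).
by rewrite -(big_mkord xpredT (fun j => t j.+1 - t j)) telescope_sumr.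
Qed.

(* The window is built by listing H in order and replacing each element
   outside T by a fixed element a of T. *)
Lemma lag_vector_window (T : {set H}) (a : H) : a \in T ->
  exists l, exists c, forall f k,
    (k \in window_starts f l) = [forall x in T, f (k + c + x)].
Proof.
move=> aT; pose t (i : nat) := let x := nth 0 (enum H) i in if x \in T then x else a.
exists [ffun j : 'I_(#|H|.-1) => t j.+1 - t j], (- t 0%N) => f k.
have partial_lag_t (i : 'I_#|H|) :
    partial_lag [ffun j : 'I_(#|H|.-1) => t j.+1 - t j] i = - t 0%N + t i.
  rewrite partial_lag_telescope 1?addrC // -ltnS prednK ?ltn_ord //.
  exact: leq_ltn_trans (ltn_ord i).
rewrite inE; apply/forallP/forall_inP => [f_window x xT | f_T i].
  have ltx : (index x (enum H) < #|H|)%N by rewrite cardE index_mem mem_enum.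
  have := f_window (Ordinal ltx); rewrite partial_lag_t addrA /=.
  by rewrite /t nth_index ?mem_enum // xT.
by rewrite partial_lag_t addrA f_T // /t; case: ifP.
Qed.

Lemma translate_support_le (f g : H -> bool) :
  (forall l, multispectrum g l <= multispectrum f l) ->
  exists c, [set x + c | x in [set x | g x]] \subset [set x | f x].
Proof.
move=> le_gf; case: (pickP g) => [a ga | no_g]; last first.
  by exists 0; apply/subsetP => y /imsetP [x]; rewrite inE no_g.
have supp_a : a \in [set x | g x] by rewrite inE.
have [l [c window_l]] := lag_vector_window supp_a.
have fits_g : (0 < #|window_starts g l|)%N.
  apply/card_gt0P; exists (- c); rewrite window_l.
  by apply/forall_inP => x; rewrite inE addNr add0r.
have : (0 < #|window_starts f l|)%N.
  by rewrite (leq_trans fits_g) // -lez_nat -!multispectrum_card.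
case/card_gt0P => k; rewrite window_l => /forall_inP f_window.
exists (k + c); apply/subsetP => y /imsetP [x gx ->].
by rewrite inE addrC f_window.
Qed.

End Windows.

Theorem lemma7 (H : finZmodType) (f1 f2 : H -> bool) :
  (forall l : {ffun 'I_(#|H|.-1) -> H}, multispectrum f1 l = multispectrum f2 l) ->
  exists l : H, forall k : H, f1 k = f2 (k + l).
Proof.
move=> eq_ms.
have [c1 supp2_supp1] : exists c, [set x + c | x in [set x | f2 x]] \subset [set x | f1 x].
  by apply: translate_support_le => l; rewrite eq_ms.
have [c2 supp1_supp2] : exists c, [set x + c | x in [set x | f1 x]] \subset [set x | f2 x].
  by apply: translate_support_le => l; rewrite eq_ms.
have supp_translate : [set x + c1 | x in [set x | f2 x]] = [set x | f1 x].
  exact: imset_sub_antisym (addIr c1) (addIr c2) supp2_supp1 supp1_supp2.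
exists (- c1) => k; rewrite -[in f1 k](subrK c1 k).
have -> : f1 (k - c1 + c1) = (k - c1 + c1 \in [set x | f1 x]) by rewrite inE.
by rewrite -supp_translate (mem_imset _ _ (addIr c1)) inE.
Qed.
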